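(* For every sufficiently large $n$ there is a tensor $T\in\mathbb{C}^{n\times n\times n}$ with $T\notin\overline{\mathrm{OT}_n(\mathbb{C})}$ such that, for each of its three families of slices (the $x$-, $y$- and $z$-slices), denoted $M_1,\dots,M_n$, and for each of the two families of $n^2$ matrices $\{M_k^TM_l\}_{k,l}$ and $\{M_kM_l^T\}_{k,l}$, the following hold: (i) the matrices of the family are symmetric and pairwise commute; (ii) the subalgebra of $M_n(\mathbb{C})$ generated by the matrices of the family and the identity matrix has dimension at most $n$; (iii) the centralizer of the matrices of the family has dimension at least $n$.
   Context: Associate to $T$ the trilinear form $t=\sum_{i,j,k}T_{ijk}x_iy_jz_k$. $\mathrm{OT}_n(\mathbb{C})$ is the set of tensors whose trilinear form can be written $g(Ax,By,Cz)$ with $A,B,C\in M_n(\mathbb{C})$ satisfying $A^TA=B^TB=C^TC=\mathrm{Id}$ and $g=\sum_{i=1}^n\alpha_ix_iy_iz_i$; closure is in the Euclidean topology. Slices: $X_k=(T_{kjl})_{j,l}$, $Y_k=(T_{ikl})_{i,l}$, $Z_k=(T_{ijk})_{i,j}$. The centralizer of a set of matrices is the set of $M\in M_n(\mathbb{C})$ commuting with all of them. *)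

From HB Require Import structures.
From mathcomp Require Import all_boot all_order all_algebra all_field.
Set Implicit Arguments. Unset Strict Implicit. Unset Printing Implicit Defensive.
Import Order.TTheory GRing.Theory Num.Theory.
Local Open Scope ring_scope.

(* The complex numbers: a numeric closed field whose real elements are
   Dedekind-complete (least-upper-bound property).  Any such field is
   isomorphic, as a normed / partially ordered field, to C. *)
Definition real_complete (C : numClosedFieldType) : Prop :=
  forall S : C -> Prop,
    (forall x, S x -> x \is Num.real) ->
    (exists x, S x) ->
    (exists M, forall x, S x -> x <= M) ->
    exists s, (forall x, S x -> x <= s) /\
              (forall M, (forall x, S x -> x <= M) -> s <= M).

Definition tensor (C : numClosedFieldType) (n : nat) := 'I_n -> 'I_n -> 'I_n -> C.

Definition orthogonal_mx (C : numClosedFieldType) (n : nat) (A : 'M[C]_n) : Prop :=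
  A^T *m A = 1%:M.

(* T in OT_n : its trilinear form equals g(Ax,By,Cz) with g = sum_r alpha_r x_r y_r z_r,
   i.e. (comparing coefficients of x_i y_j z_k)
   T_{ijk} = sum_r alpha_r A_{ri} B_{rj} C_{rk}. *)
Definition OT (C : numClosedFieldType) (n : nat) (T : tensor C n) : Prop :=
  exists (A B D : 'M[C]_n) (alpha : 'I_n -> C),
    [/\ orthogonal_mx A, orthogonal_mx B, orthogonal_mx D &
        forall i j k, T i j k = \sum_(r < n) alpha r * A r i * B r j * D r k].

(* Closure in the Euclidean topology of C^{n^3} (via the equivalent sup norm). *)
Definition in_closure (C : numClosedFieldType) (n : nat)
    (S : tensor C n -> Prop) (T : tensor C n) : Prop :=
  forall eps : C, 0 < eps ->
    exists T' : tensor C n, S T' /\ forall i j k, `|T i j k - T' i j k| < eps.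

Definition xslice (C : numClosedFieldType) (n : nat) (T : tensor C n) (k : 'I_n) : 'M[C]_n :=
  \matrix_(j, l) T k j l.
Definition yslice (C : numClosedFieldType) (n : nat) (T : tensor C n) (k : 'I_n) : 'M[C]_n :=
  \matrix_(i, l) T i k l.
Definition zslice (C : numClosedFieldType) (n : nat) (T : tensor C n) (k : 'I_n) : 'M[C]_n :=
  \matrix_(i, j) T i j k.

Definition famTM (C : numClosedFieldType) (n : nat) (M : 'I_n -> 'M[C]_n) : seq 'M[C]_n :=
  [seq (M k)^T *m M l | k <- enum 'I_n, l <- enum 'I_n].
Definition famMT (C : numClosedFieldType) (n : nat) (M : 'I_n -> 'M[C]_n) : seq 'M[C]_n :=
  [seq M k *m (M l)^T | k <- enum 'I_n, l <- enum 'I_n].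

(* Properties (i)-(iii) for a family of (n+1)x(n+1) matrices.
   agenv V = subalgebra generated by the subspace V (contains 1);
   centraliser_vspace V = centralizer of V (= centralizer of the family). *)
Definition good_family (C : numClosedFieldType) (n : nat) (F : seq 'M[C]_n.+1) : Prop :=
  [/\ (forall A, A \in F -> A^T = A),
      (forall A B, A \in F -> B \in F -> A *m B = B *m A),
      (\dim (agenv (<<F>>%VS)) <= n.+1)%N &
      (n.+1 <= \dim (centraliser_vspace (<<F>>%VS)))%N].

Definition good_slices (C : numClosedFieldType) (n : nat) (M : 'I_n.+1 -> 'M[C]_n.+1) : Prop :=
  good_family (famTM M) /\ good_family (famMT M).

From HB Require Import structures.
From mathcomp Require Import all_boot all_order all_algebra all_field.
From mathcomp Require Import ring zify.
Set Implicit Arguments. Unset Strict Implicit. Unset Printing Implicit Defensive.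
Import Order.TTheory GRing.Theory Num.Theory.
Local Open Scope ring_scope.

(* Put m = (n+1)/2 and u_a = e_a + i e_(m+a) for a < m.  These vectors are
   isotropic (u_a . u_b = 0 for all a, b), so for every t : [m]^3 -> C the
   tensor T_t = sum_(a,b,c) t_(abc) u_a (x) u_b (x) u_c has slices M_k with
   M_k^T M_l = M_k M_l^T = 0: all six families of products vanish and
   (i)-(iii) hold trivially.  The "corner" entries T_(abc), a, b, c < m, of a tensor
   in OT_n are values of a degree-3 polynomial map in 3(n+1)m parameters; as there
   are many more monomials of bounded degree in the m^3 corner entries than
   monomials in the parameters, linear algebra gives a nonzero polynomial G
   vanishing on all corners of OT_n.  Kronecker substitution yields a point t
   with G(t) <> 0; the corner of T_t is t itself, so by continuity of G no
   tensor of OT_n comes close to T_t. *)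

(* A family consisting of zero matrices trivially satisfies (i)-(iii): it is
   symmetric and commutative, generates the algebra C 1, and its centralizer
   is the whole matrix algebra. *)
Lemma good_family_zero (C : numClosedFieldType) (n : nat) (F : seq 'M[C]_n.+1) :
  (forall A, A \in F -> A = 0) -> good_family F.
Proof.
move=> F0.
have spanF0 : (<<F>> = 0)%VS.
  by apply/eqP; rewrite -subv0; apply/span_subvP => A /F0 ->; exact: mem0v.
split.
- by move=> A /F0 ->; rewrite trmx0.
- by move=> A B /F0 -> /F0 ->; rewrite !mul0mx.
- rewrite spanF0.
  have /dimvS : (agenv (0 : {vspace 'M[C]_n.+1}) <= 1)%VS.
    by apply: agenv_sub_modl; rewrite ?subvv // prod0v sub0v.
  by rewrite dimv1 => /leq_trans; apply.
- rewrite spanF0.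
  have /dimvS : (fullv <= centraliser_vspace (0 : {vspace 'M[C]_n.+1}))%VS.
    by apply/centvsP => u v _; rewrite memv0 => /eqP ->; rewrite mulr0 mul0r.
  by rewrite dimvf /dim /= => /(leq_trans _); apply; rewrite leq_pmulr.
Qed.

Lemma slice_products_vanish (R : comPzRingType) (N : nat) (Q : finType)
    (M : 'I_N -> 'M[R]_N) (c : Q -> R) (F G H : Q -> 'I_N -> R) :
  (forall k j l, M k j l = \sum_q c q * F q k * G q j * H q l) ->
  (forall q q', \sum_j G q j * G q' j = 0) ->
  forall k l, (M k)^T *m M l = 0.
Proof.
move=> defM isoG k l; apply/matrixP => x y; rewrite !mxE.
under eq_bigr => j _ do rewrite mxE !defM big_distrlr /=.
rewrite exchange_big /= big1 // => q _; rewrite exchange_big /= big1 // => q' _.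
transitivity ((c q * F q k * H q x * (c q' * F q' l * H q' y)) *
              \sum_j G q j * G q' j).
  by rewrite mulr_sumr; apply: eq_bigr => j _; ring.
by rewrite isoG mulr0.
Qed.

(* If both the second and third factors are isotropic, every product family
   built from the slices vanishes, hence the slices are good; the family
   M_k M_l^T is handled by applying the previous lemma to the transposes. *)
Lemma good_slices_isotropic (C : numClosedFieldType) (n : nat) (Q : finType)
    (M : 'I_n.+1 -> 'M[C]_n.+1) (c : Q -> C) (F G H : Q -> 'I_n.+1 -> C) :
  (forall k j l, M k j l = \sum_q c q * F q k * G q j * H q l) ->
  (forall q q', \sum_j G q j * G q' j = 0) ->
  (forall q q', \sum_j H q j * H q' j = 0) ->
  good_slices M.
Proof.
move=> defM isoG isoH.
have MTM := slice_products_vanish defM isoG.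
have defMT k j l : (M k)^T j l = \sum_q c q * F q k * H q j * G q l.
  by rewrite mxE defM; apply: eq_bigr => q _; ring.
have MMT k l : M k *m (M l)^T = 0.
  by rewrite -[M k]trmxK (slice_products_vanish defMT isoH).
by split; apply: good_family_zero => A /allpairsP [[k l] [_ _ ->]].
Qed.

Section Isotropic.
Variable C : numClosedFieldType.
Variables N m : nat.
Hypothesis mmN : (m + m <= N)%N.

Definition iso_vec (a : 'I_m) (i : 'I_N) : C :=
  ((i : nat) == a)%:R + 'i * ((i : nat) == m + a)%:R.

Lemma sum_indicator_prod (k l : nat) : (k < N)%N ->
  \sum_(i < N) ((((i : nat) == k)%:R * ((i : nat) == l)%:R) : C) = (k == l)%:R.
Proof.
move=> ltkN; rewrite (bigD1 (Ordinal ltkN)) //= big1 ?addr0 ?eqxx ?mul1r //.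
move=> i /eqP neqi.
have /negbTE -> : (i : nat) != k by apply/eqP => eik; apply/neqi/val_inj.
by rewrite mul0r.
Qed.

Lemma indicator_halves_disjoint (a b : 'I_m) (i : 'I_N) :
  ((((i : nat) == a)%:R * ((i : nat) == m + b)%:R) : C) = 0.
Proof.
case: eqP => [ea|]; last by rewrite mul0r.
case: eqP => [eb|]; last by rewrite mulr0.
by have := ltn_ord a; lia.
Qed.

Lemma iso_vec_isotropic (a b : 'I_m) : \sum_i iso_vec a i * iso_vec b i = 0.
Proof.
have := ltn_ord a => ltam.
have ltaN : (a < N)%N by lia.
have ltmaN : (m + a < N)%N by lia.
have sqi : 'i * 'i = -1 :> C by rewrite -expr2 sqrCi.
transitivity (\sum_(i < N) ((((i : nat) == a)%:R * ((i : nat) == b)%:R)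
                - (((i : nat) == m + a)%:R * ((i : nat) == m + b)%:R) : C)).
  apply: eq_bigr => i _; rewrite /iso_vec.
  transitivity ((((i : nat) == a)%:R * ((i : nat) == b)%:R)
      + 'i * (((i : nat) == a)%:R * ((i : nat) == m + b)%:R)
      + 'i * (((i : nat) == b)%:R * ((i : nat) == m + a)%:R)
      + ('i * 'i) * (((i : nat) == m + a)%:R * ((i : nat) == m + b)%:R) : C).
    by ring.
  by rewrite !indicator_halves_disjoint sqi !mulr0 !addr0 mulN1r.
by rewrite sumrB !sum_indicator_prod // eqn_add2l subrr.
Qed.
End Isotropic.
Arguments iso_vec {C N m}.

Section Continuity.
Variable C : numFieldType.
Variable X : Type.
Variable t : X -> C.

Definition cont_at (f : (X -> C) -> C) :=
  forall e : C, 0 < e -> exists2 d : C, 0 < d &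
    forall x, (forall v, `|x v - t v| < d) -> `|f x - f t| < e.

Lemma pos_lower_bound (d1 d2 : C) : 0 < d1 -> 0 < d2 ->
  exists2 d, 0 < d & d <= d1 /\ d <= d2.
Proof.
move=> d1gt0 d2gt0.
by have /orP[le|le] := real_leVge (gtr0_real d1gt0) (gtr0_real d2gt0);
  [exists d1 | exists d2].
Qed.

Lemma cont_const a : cont_at (fun _ => a).
Proof. by move=> e e_gt0; exists 1 => // x _; rewrite subrr normr0. Qed.

Lemma cont_coord v : cont_at (fun x => x v).
Proof. by move=> e e_gt0; exists e. Qed.

Lemma cont_ext f g : cont_at f -> f =1 g -> cont_at g.
Proof.
move=> cf fg e e_gt0; have [d d_gt0 Hd] := cf e e_gt0.
by exists d => // x hx; rewrite -!fg; exact: Hd.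
Qed.

Lemma cont_add f g : cont_at f -> cont_at g -> cont_at (fun x => f x + g x).
Proof.
move=> cf cg e e_gt0.
have e2_gt0 : 0 < e / 2%:R by rewrite divr_gt0 ?ltr0n.
have [d1 d1_gt0 Hf] := cf _ e2_gt0; have [d2 d2_gt0 Hg] := cg _ e2_gt0.
have [d d_gt0 [le_d1 le_d2]] := pos_lower_bound d1_gt0 d2_gt0.
exists d => // x hx.
have -> : f x + g x - (f t + g t) = (f x - f t) + (g x - g t) by ring.
apply: le_lt_trans (ler_normD _ _) _; rewrite [e]splitr; apply: ltrD.
  by apply: Hf => v; apply: lt_le_trans (hx v) le_d1.
by apply: Hg => v; apply: lt_le_trans (hx v) le_d2.
Qed.

(* The usual estimate |fg - f(t)g(t)| <= |f - f(t)| |g| + |f(t)| |g - g(t)|,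
   with |g| <= |g(t)| + 1 near t. *)
Lemma cont_mul f g : cont_at f -> cont_at g -> cont_at (fun x => f x * g x).
Proof.
move=> cf cg e e_gt0.
set Bf := `|f t| + 1; set Bg := `|g t| + 1.
have Bf_gt0 : 0 < Bf by rewrite /Bf ltr_wpDl.
have Bg_gt0 : 0 < Bg by rewrite /Bg ltr_wpDl.
have e2_gt0 : 0 < e / 2%:R by rewrite divr_gt0 ?ltr0n.
have [eg eg_gt0 [eg_le1 eg_le]] :=
  pos_lower_bound ltr01 (divr_gt0 e2_gt0 Bf_gt0 : 0 < e / 2%:R / Bf).
have [d1 d1_gt0 Hf] := cf _ (divr_gt0 e2_gt0 Bg_gt0).
have [d2 d2_gt0 Hg] := cg _ eg_gt0.
have [d d_gt0 [le_d1 le_d2]] := pos_lower_bound d1_gt0 d2_gt0.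
exists d => // x hx.
have near_f : `|f x - f t| < e / 2%:R / Bg.
  by apply: Hf => v; apply: lt_le_trans (hx v) le_d1.
have near_g : `|g x - g t| < eg by apply: Hg => v; apply: lt_le_trans (hx v) le_d2.
have gx_le : `|g x| <= Bg.
  rewrite -[g x](subrK (g t)); apply: le_trans (ler_normD _ _) _.
  by rewrite /Bg addrC lerD2l; exact: ltW (lt_le_trans near_g eg_le1).
have -> : f x * g x - f t * g t = (f x - f t) * g x + f t * (g x - g t) by ring.
apply: le_lt_trans (ler_normD _ _) _; rewrite [e]splitr; apply: ltrD.
  rewrite normrM; apply: le_lt_trans (ler_wpM2l (normr_ge0 _) gx_le) _.
  by rewrite -(divfK (lt0r_neq0 Bg_gt0) (e / 2%:R)) ltr_pM2r.
have ft_le : `|f t| <= Bf by rewrite /Bf lerDl ler01.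
rewrite normrM; apply: le_lt_trans (ler_wpM2r (normr_ge0 _) ft_le) _.
rewrite -(divfK (lt0r_neq0 Bf_gt0) (e / 2%:R)) [_ / Bf * Bf]mulrC ltr_pM2l //.
exact: lt_le_trans near_g eg_le.
Qed.

Lemma cont_sum (I : Type) (r : seq I) (F : I -> (X -> C) -> C) :
  (forall i, cont_at (F i)) -> cont_at (fun x => \sum_(i <- r) F i x).
Proof.
move=> cF; elim: r => [|i r IH].
  by apply: (cont_ext (cont_const 0)) => x; rewrite big_nil.
by apply: (cont_ext (cont_add (cF i) IH)) => x; rewrite big_cons.
Qed.

Lemma cont_prod (I : Type) (r : seq I) (F : I -> (X -> C) -> C) :
  (forall i, cont_at (F i)) -> cont_at (fun x => \prod_(i <- r) F i x).
Proof.
move=> cF; elim: r => [|i r IH].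
  by apply: (cont_ext (cont_const 1)) => x; rewrite big_nil.
by apply: (cont_ext (cont_mul (cF i) IH)) => x; rewrite big_cons.
Qed.

Lemma cont_exp f k : cont_at f -> cont_at (fun x => f x ^+ k).
Proof.
move=> cf; elim: k => [|k IH].
  by apply: (cont_ext (cont_const 1)) => x; rewrite expr0.
by apply: (cont_ext (cont_mul cf IH)) => x; rewrite exprS.
Qed.
End Continuity.

Section BoundedPolynomials.
Variable R : comPzRingType.
Variable W : finType.

Definition monomial (f : W -> nat) (w : W -> R) := \prod_v w v ^+ f v.

Definition polyfun (K : nat) (h : (W -> R) -> R) :=
  exists l : seq (R * {ffun W -> nat}),
    (forall p, p \in l -> forall v, (p.2 v < K)%N) /\
    forall w, h w = \sum_(p <- l) p.1 * monomial p.2 w.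

Lemma polyfun_ext K h h' : polyfun K h -> h =1 h' -> polyfun K h'.
Proof. by move=> [l [lK defh]] hh'; exists l; split=> // w; rewrite -hh'. Qed.

Lemma polyfun_weaken K K' h : (K <= K')%N -> polyfun K h -> polyfun K' h.
Proof.
move=> leKK' [l [lK defh]]; exists l; split=> // p pl v.
exact: leq_trans (lK p pl v) leKK'.
Qed.

Lemma polyfun_const a : polyfun 1 (fun _ => a).
Proof.
exists [:: (a, [ffun => 0%N])]; split.
  by move=> p; rewrite inE => /eqP -> v; rewrite ffunE.
move=> w; rewrite big_seq1 /monomial /=.
by rewrite big1 ?mulr1 // => v _; rewrite ffunE expr0.
Qed.

Lemma polyfun_var v : polyfun 2 (fun w => w v).
Proof.
exists [:: (1, [ffun v' => nat_of_bool (v' == v)])]; split.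
  by move=> p; rewrite inE => /eqP -> v'; rewrite ffunE; case: (v' == v).
move=> w; rewrite big_seq1 /monomial /= mul1r.
rewrite (bigD1 v) //= ffunE eqxx expr1 big1 ?mulr1 // => v' nv'v.
by rewrite ffunE (negbTE nv'v) expr0.
Qed.

Lemma polyfun_add K h1 h2 :
  polyfun K h1 -> polyfun K h2 -> polyfun K (fun w => h1 w + h2 w).
Proof.
move=> [l1 [l1K defh1]] [l2 [l2K defh2]]; exists (l1 ++ l2); split.
  by move=> p; rewrite mem_cat => /orP[/l1K|/l2K].
by move=> w; rewrite big_cat defh1 defh2.
Qed.

Lemma monomialD (f g : {ffun W -> nat}) w :
  monomial [ffun v => (f v + g v)%N] w = monomial f w * monomial g w.
Proof.
by rewrite /monomial -big_split; apply: eq_bigr => v _; rewrite ffunE exprD.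
Qed.

Lemma polyfun_mul K1 K2 h1 h2 : polyfun K1.+1 h1 -> polyfun K2.+1 h2 ->
  polyfun (K1 + K2).+1 (fun w => h1 w * h2 w).
Proof.
move=> [l1 [l1K defh1]] [l2 [l2K defh2]].
exists [seq (p.1 * q.1, [ffun v : W => (p.2 v + q.2 v)%N])
        | p : R * {ffun W -> nat} <- l1, q : R * {ffun W -> nat} <- l2].
split.
  move=> x /allpairsP [[p q] [/= pl ql ->]] v /=; rewrite ffunE ltnS.
  by apply: leq_add; rewrite -ltnS; [exact: l1K | exact: l2K].
move=> w; rewrite defh1 defh2 big_distrl /=.
elim: l1 {l1K defh1} => [|p l1 IH]; first by rewrite !big_nil.
rewrite allpairs_cons big_cat big_cons /= IH big_map; congr (_ + _).
by rewrite mulr_sumr; apply: eq_bigr => q _; rewrite monomialD /=; ring.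
Qed.

Lemma polyfun_sum (I : Type) (r : seq I) (F : I -> (W -> R) -> R) K :
  (forall i, polyfun K.+1 (F i)) -> polyfun K.+1 (fun w => \sum_(i <- r) F i w).
Proof.
move=> pF; elim: r => [|i r IH].
  by apply: (polyfun_ext (polyfun_weaken _ (polyfun_const 0))) => // w;
    rewrite big_nil.
by apply: (polyfun_ext (polyfun_add (pF i) IH)) => w; rewrite big_cons.
Qed.

Lemma polyfun_prod (I : Type) (r : seq I) (F : I -> (W -> R) -> R) K :
  (forall i, polyfun K.+1 (F i)) ->
  polyfun (K * size r).+1 (fun w => \prod_(i <- r) F i w).
Proof.
move=> pF; elim: r => [|i r IH].
  by apply: (polyfun_ext (polyfun_weaken _ (polyfun_const 1))) => // w;
    rewrite big_nil.
apply: (polyfun_ext (polyfun_weaken _ (polyfun_mul (pF i) IH))) => [|w].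
  by rewrite /= mulnS.
by rewrite big_cons.
Qed.

Lemma polyfun_exp f K k : polyfun K.+1 f -> polyfun (K * k).+1 (fun w => f w ^+ k).
Proof.
move=> pf; elim: k => [|k IH].
  by apply: (polyfun_ext (polyfun_weaken _ (polyfun_const 1))) => // w;
    rewrite expr0.
apply: (polyfun_ext (polyfun_weaken _ (polyfun_mul IH pf))) => [|w].
  by rewrite mulnS addnC.
by rewrite exprS mulrC.
Qed.

Lemma polyfun_coefficients (k : nat) (l : seq (R * {ffun W -> nat})) w :
  (forall p, p \in l -> forall v, (p.2 v < k.+1)%N) ->
  \sum_(p <- l) p.1 * monomial p.2 w =
  \sum_(f : {ffun W -> 'I_k.+1})
     (\sum_(p <- l | p.2 == [ffun v => (f v : nat)]) p.1) *
     monomial [ffun v => (f v : nat)] w.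
Proof.
move=> lk.
under [RHS]eq_bigr => f _ do rewrite big_distrl /=.
rewrite (exchange_big_dep xpredT) //= big_seq [RHS]big_seq.
apply: eq_bigr => p pl.
have trunc_p : [ffun v => ([ffun v => inord (p.2 v)] v : 'I_k.+1) : nat] = p.2.
  by apply/ffunP => v; rewrite !ffunE inordK //; exact: lk.
rewrite (big_pred1 [ffun v => inord (p.2 v)]) /= ?trunc_p // => f /=.
apply/eqP/eqP => [->|->] //.
by apply/ffunP => v; apply: val_inj; rewrite ffunE /= ffunE inordK.
Qed.
End BoundedPolynomials.

Lemma underdetermined_kernel (K : fieldType) (E F : finType) (kap : E -> F -> K) :
  (#|F| < #|E|)%N ->
  exists c : E -> K, (exists e, c e != 0) /\ forall f, \sum_e c e * kap e f = 0.
Proof.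
move=> ltFE.
pose A : 'M[K]_(#|E|, #|F|) := \matrix_(i, j) kap (enum_val i) (enum_val j).
have /matrix0Pn [i [j kerij]] : kermx A != 0.
  rewrite -mxrank_eq0 mxrank_ker subn_eq0 -ltnNge.
  exact: leq_ltn_trans (rank_leq_col A) ltFE.
exists (fun e => kermx A i (enum_rank e)); split.
  by exists (enum_val j); rewrite enum_valK.
move=> f.
have := congr1 (fun M : 'M[K]_(#|E|, #|F|) => M i (enum_rank f)) (mulmx_ker A).
rewrite /= !mxE => kerA; rewrite -[RHS]kerA.
rewrite (reindex (fun i : 'I_#|E| => enum_val i)) /=; last first.
  by exists enum_rank => x _; [rewrite enum_valK | rewrite enum_rankK].
by apply: eq_bigr => x _; rewrite enum_valK [A _ _]mxE enum_rankK.
Qed.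

Definition monomial_fin (K : comPzRingType) (Q : finType) (k : nat)
    (e : {ffun Q -> 'I_k}) (x : Q -> K) : K :=
  \prod_q x q ^+ e q.

Lemma polynomial_annihilator (K : fieldType) (W Q : finType)
    (psi : (W -> K) -> Q -> K) (s k : nat) :
  (forall e : {ffun Q -> 'I_s.+1}, polyfun k.+1 (fun w => monomial_fin e (psi w))) ->
  (k.+1 ^ #|W| < s.+1 ^ #|Q|)%N ->
  exists c : {ffun Q -> 'I_s.+1} -> K,
    (exists e, c e != 0) /\ forall w, \sum_e c e * monomial_fin e (psi w) = 0.
Proof.
move=> poly_psi lt_count.
have [l hl] := fin_all_exists poly_psi.
pose kap (e : {ffun Q -> 'I_s.+1}) (f : {ffun W -> 'I_k.+1}) :=
  \sum_(p <- l e | p.2 == [ffun v => (f v : nat)]) p.1.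
have lt_card : (#|{ffun W -> 'I_k.+1}| < #|{ffun Q -> 'I_s.+1}|)%N.
  by rewrite !card_ffun !card_ord.
have [c [c_neq0 c_ker]] := underdetermined_kernel kap lt_card.
exists c; split => // w.
under eq_bigr => e _ do
  rewrite (proj2 (hl e)) (polyfun_coefficients _ (proj1 (hl e))) big_distrr /=.
rewrite exchange_big /= big1 // => f _.
transitivity ((\sum_e c e * kap e f) * monomial [ffun v => (f v : nat)] w).
  by rewrite big_distrl; apply: eq_bigr => e _; rewrite mulrA.
by rewrite c_ker mul0r.
Qed.

Section Digits.
Local Open Scope nat_scope.

Lemma digits_inj (b N : nat) (d d' : 'I_N -> nat) : 0 < b ->
  (forall i, d i < b) -> (forall i, d' i < b) ->
  \sum_(i < N) d i * b ^ i = \sum_(i < N) d' i * b ^ i -> d =1 d'.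
Proof.
move=> b_gt0; elim: N d d' => [|N IH] d d' db d'b E i; first by case: i.
move: E; rewrite !big_ord_recl /= !expn0 !muln1.
under eq_bigr => j _ do rewrite /bump /= expnS mulnCA.
under [X in _ = _ + X]eq_bigr => j _ do rewrite /bump /= expnS mulnCA.
rewrite -!big_distrr /= => E.
have low : d ord0 = d' ord0.
  have := congr1 (modn^~ b) E.
  by rewrite addnC [d' ord0 + _]addnC [b * _]mulnC [b * _]mulnC !modnMDl !modn_small.
have high : \sum_(j < N) d (lift ord0 j) * b ^ j =
             \sum_(j < N) d' (lift ord0 j) * b ^ j.
  have := congr1 (divn^~ b) E.
  rewrite addnC [d' ord0 + _]addnC [b * _]mulnC [b * _]mulnC.
  by rewrite !divnMDl // !divn_small // !addn0.
have := IH _ _ (fun j => db _) (fun j => d'b _) high.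
by case: (unliftP ord0 i) => [j ->|->] //; exact.
Qed.
End Digits.

Section NonVanishing.
Variable K : numDomainType.
Variable Q : finType.
Variable s : nat.

Definition kronecker_code (e : {ffun Q -> 'I_s.+1}) : nat :=
  (\sum_(i < #|Q|) (e (enum_val i) : nat) * s.+1 ^ i)%N.

Lemma kronecker_code_inj : injective kronecker_code.
Proof.
move=> e e' E; apply/ffunP => q; apply: val_inj.
have := digits_inj (ltn0Sn s) (fun i => ltn_ord (e (enum_val i)))
  (fun i => ltn_ord (e' (enum_val i))) E (enum_rank q).
by rewrite /= enum_rankK.
Qed.

Lemma monomial_kronecker (e : {ffun Q -> 'I_s.+1}) (y : K) :
  monomial_fin e (fun q => y ^+ (s.+1 ^ enum_rank q)) = y ^+ kronecker_code e.
Proof.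
rewrite /monomial_fin; under eq_bigr => q _ do rewrite -exprM.
rewrite prodrXr; congr (_ ^+ _).
rewrite (reindex (fun i : 'I_#|Q| => enum_val i)) /=; last first.
  by exists enum_rank => x _; [rewrite enum_valK | rewrite enum_rankK].
by apply: eq_bigr => i _; rewrite enum_valK mulnC.
Qed.

(* In characteristic 0 a nonzero univariate polynomial has a non-root among
   0, 1, ..., size p - 1. *)
Lemma exists_nonroot (p : {poly K}) : p != 0 -> exists y, p.[y] != 0.
Proof.
move=> p_neq0; pose rs := [seq (i%:R : K) | i <- iota 0 (size p)].
have [all_roots|/allPn [y _ not_root]] := boolP (all (root p) rs); last first.
  by exists y; rewrite -rootE.
have := max_poly_roots p_neq0 all_roots.
rewrite map_inj_uniq ?iota_uniq ?size_map ?size_iota ?ltnn //.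
  by move=> /(_ isT).
by move=> a b /eqP; rewrite eqr_nat => /eqP.
Qed.

Lemma poly_nonvanishing (c : {ffun Q -> 'I_s.+1} -> K) : (exists e, c e != 0) ->
  exists x : Q -> K, \sum_e c e * monomial_fin e x != 0.
Proof.
move=> [e0 ce0_neq0].
pose p : {poly K} := \sum_e c e *: 'X^(kronecker_code e).
have p_neq0 : p != 0.
  apply/eqP => /(congr1 (fun q : {poly K} => q`_(kronecker_code e0))).
  rewrite coef0 coef_sum (bigD1 e0) //= coefZ coefXn eqxx mulr1 big1 ?addr0.
    by move/eqP; rewrite (negbTE ce0_neq0).
  move=> e ne; rewrite coefZ coefXn.
  have [/kronecker_code_inj eqe|] := eqVneq; last by rewrite mulr0.
  by rewrite eqe eqxx in ne.
have [y py_neq0] := exists_nonroot p_neq0.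
exists (fun q => y ^+ (s.+1 ^ enum_rank q)).
under eq_bigr => e _ do rewrite monomial_kronecker.
suff <- : p.[y] = \sum_e c e * y ^+ kronecker_code e by [].
by rewrite horner_sum; apply: eq_bigr => e _; rewrite hornerZ hornerXn.
Qed.
End NonVanishing.

Section Construction.
Variable C : numClosedFieldType.
Variables N m : nat.
Hypothesis mmN : (m + m <= N)%N.

Let Q : finType := ('I_m * 'I_m * 'I_m)%type.
(* Parameters of a tensor of OT_N restricted to the first m coordinates:
   (0, r, a) ~ alpha_r A_(ra), (1, r, b) ~ B_(rb), (2, r, c) ~ D_(rc). *)
Let W : finType := ('I_3 * ('I_N * 'I_m))%type.

Definition iso_tensor (t : Q -> C) : tensor C N := fun i j k =>
  \sum_(q : Q) t q * iso_vec q.1.1 i * iso_vec q.1.2 j * iso_vec q.2 k.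

Lemma xslice_iso_tensor t k j l : xslice (iso_tensor t) k j l =
  \sum_q t q * iso_vec q.1.1 k * iso_vec q.1.2 j * iso_vec q.2 l.
Proof. by rewrite mxE. Qed.

Lemma yslice_iso_tensor t k j l : yslice (iso_tensor t) k j l =
  \sum_q t q * iso_vec q.1.2 k * iso_vec q.1.1 j * iso_vec q.2 l.
Proof. by rewrite mxE; apply: eq_bigr => q _; ring. Qed.

Lemma zslice_iso_tensor t k j l : zslice (iso_tensor t) k j l =
  \sum_q t q * iso_vec q.2 k * iso_vec q.1.1 j * iso_vec q.1.2 l.
Proof. by rewrite mxE; apply: eq_bigr => q _; ring. Qed.

Let le_mN : (m <= N)%N. Proof. lia. Qed.
Let corner (a : 'I_m) : 'I_N := widen_ord le_mN a.

Lemma iso_vec_corner (a b : 'I_m) : iso_vec b (corner a) = (a == b)%:R :> C.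
Proof.
rewrite /iso_vec /=.
have /negbTE -> : (a : nat) != m + b by have := ltn_ord a; lia.
by rewrite mulr0 addr0.
Qed.

Lemma iso_tensor_corner t (q : Q) :
  iso_tensor t (corner q.1.1) (corner q.1.2) (corner q.2) = t q.
Proof.
rewrite /iso_tensor (bigD1 q) //= !iso_vec_corner !eqxx !mulr1 big1 ?addr0 //.
move=> [[a' b'] c'] /=; rewrite !iso_vec_corner.
case: q => [[a b] c] /=.
have [<-|] := eqVneq a a'; last by rewrite !mulr0 !mul0r.
have [<-|] := eqVneq b b'; last by rewrite !mulr0 !mul0r.
have [<-|] := eqVneq c c'; last by rewrite !mulr0.
by rewrite eqxx.
Qed.

Definition ot_corner (w : W -> C) (q : Q) : C :=
  \sum_(r < N) w (0, (r, q.1.1)) * w (1, (r, q.1.2)) * w (2, (r, q.2)).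

Lemma OT_corner (T : tensor C N) : OT T ->
  exists w : W -> C, forall q : Q, T (corner q.1.1) (corner q.1.2) (corner q.2) = ot_corner w q.
Proof.
move=> [A [B [D [alpha [_ _ _ defT]]]]].
exists (fun x : W => if (x.1 : nat) == 0%N then alpha x.2.1 * A x.2.1 (corner x.2.2)
  else if (x.1 : nat) == 1%N then B x.2.1 (corner x.2.2) else D x.2.1 (corner x.2.2)).
by move=> q; rewrite defT /ot_corner; apply: eq_bigr => r _ /=; ring.
Qed.

Lemma polyfun_ot_corner q : polyfun 4 (fun w => ot_corner w q).
Proof.
apply: polyfun_sum => r.
exact: polyfun_mul (polyfun_mul (polyfun_var _ _) (polyfun_var _ _))
                   (polyfun_var _ _).
Qed.

Let s := (3 * #|Q|)%N.

Lemma polyfun_monomial_ot_corner (e : {ffun Q -> 'I_s.+1}) :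
  polyfun (3 * s * #|Q|).+1 (fun w => monomial_fin e (ot_corner w)).
Proof.
have size_enum : size (index_enum Q) = #|Q|.
  by rewrite cardT -deprecated_filter_index_enum filter_predT.
rewrite -size_enum; apply: polyfun_prod => q.
apply: polyfun_weaken (polyfun_exp (e q) (polyfun_ot_corner q)).
by rewrite ltnS leq_mul2l /= -ltnS ltn_ord.
Qed.

Lemma monomial_count : (N <= (m + m).+1)%N -> (13 <= m)%N ->
  ((3 * s * #|Q|).+1 ^ #|W| < s.+1 ^ #|Q|)%N.
Proof.
move=> le_N le_13m; rewrite /s !card_prod !card_ord.
set M := (m * m * m)%N.
have lt_par : (6 * (N * m) < M)%N by rewrite /M; nia.
apply: (@leq_ltn_trans (((3 * M).+1 ^ 2) ^ (3 * (N * m)))).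
  by rewrite leq_exp2r; nia.
by rewrite -expnM ltn_exp2l; nia.
Qed.

Lemma iso_tensor_not_in_closure : (N <= (m + m).+1)%N -> (13 <= m)%N ->
  exists t : Q -> C, ~ in_closure (@OT C N) (iso_tensor t).
Proof.
move=> le_N le_13m.
have [c [c_neq0 c_ann]] := polynomial_annihilator polyfun_monomial_ot_corner
  (monomial_count le_N le_13m).
have [t Gt_neq0] := poly_nonvanishing c_neq0.
exists t => t_cl.
pose G (x : Q -> C) := \sum_e c e * monomial_fin e x.
have G_cont : cont_at t G.
  apply: cont_sum => e; apply: cont_mul; first exact: cont_const.
  by apply: cont_prod => q; apply: cont_exp; exact: cont_coord.
have Gt_pos : 0 < `|G t| by rewrite normr_gt0.
have [d d_gt0 near_G] := G_cont _ Gt_pos.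
have [T [T_OT near_T]] := t_cl d d_gt0.
have [w cornerT] := OT_corner T_OT.
have GT0 : G (fun q => T (corner q.1.1) (corner q.1.2) (corner q.2)) = 0.
  rewrite -(c_ann w); apply: eq_bigr => e _; congr (_ * _).
  by apply: eq_bigr => q _; rewrite cornerT.
have := near_G (fun q => T (corner q.1.1) (corner q.1.2) (corner q.2)).
rewrite GT0 sub0r normrN ltxx => absurd; apply: notF; apply: absurd => q.
by rewrite -(iso_tensor_corner t q) distrC near_T.
Qed.
End Construction.

Theorem theorem52 (C : numClosedFieldType) (HC : real_complete C) :
  exists N : nat, forall n : nat, (N <= n.+1)%N ->
    exists T : tensor C n.+1,
      ~ in_closure (@OT C n.+1) T /\
      good_slices (xslice T) /\ good_slices (yslice T) /\ good_slices (zslice T).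
Proof.
exists 26%N => n le_26n.
set m := (n.+1)./2.
have mmN : (m + m <= n.+1)%N by rewrite addnn -geq_half_double.
have le_N : (n.+1 <= (m + m).+1)%N by rewrite addnn -leq_half_double.
have le_13m : (13 <= m)%N by rewrite geq_half_double.
have [t t_notcl] := iso_tensor_not_in_closure C mmN le_N le_13m.
have iso q q' := iso_vec_isotropic C mmN q q'.
exists (iso_tensor t); split => //.
by split; last split;
  [ apply: good_slices_isotropic (xslice_iso_tensor t) _ _
  | apply: good_slices_isotropic (yslice_iso_tensor t) _ _
  | apply: good_slices_isotropic (zslice_iso_tensor t) _ _ ] => q q'; exact: iso.
Qed.
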